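(* Let $V=\{n\in\mathbb{Z} : n\geq 2,\ 5\nmid n\}$ and let $\Gamma_5$ be the directed graph on $V$ with up-edges $(n,(n+5)^2)$ for $n\in V$ and down-edges $(n^2,n)$ for $n\in V$. Then no path in $\Gamma_5$ contains $UUDD$ as a subpath; that is, there do not exist vertices $x,a,z,b,y\in V$ such that $(x,a)$ and $(a,z)$ are up-edges and $(z,b)$ and $(b,y)$ are down-edges (equivalently, $a=(x+5)^2$, $z=(a+5)^2$, $z=b^2$, $b=y^2$).
   Context: Each edge of a path is labelled $U$ if it is an up-edge and $D$ if it is a down-edge; a path contains $UUDD$ as a subpath if it has four consecutive edges labelled $U,U,D,D$. *)

From Stdlib Require Import ZArith.
Open Scope Z_scope.

Definition inV (n : Z) : Prop := 2 <= n /\ ~ (5 | n).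

Definition up_edge (u v : Z) : Prop := inV u /\ v = (u + 5) ^ 2.

Definition down_edge (u v : Z) : Prop := inV v /\ u = v ^ 2.

From Stdlib Require Import ZArith Lia.
Open Scope Z_scope.

(* Two up-edges followed by two down-edges force [y^2 = (x + 5)^2 + 5] with
   [x >= 2]; but [(x + 5)^2 + 5] lies strictly between the consecutive
   squares [(x + 5)^2] and [(x + 6)^2], so it is not a square. *)

Lemma no_square_strictly_between (n m : Z) :
  0 <= n -> 0 <= m -> n ^ 2 < m ^ 2 < (n + 1) ^ 2 -> False.
Proof.
  intros Hn Hm [Hlo Hhi].
  apply Z.pow_lt_mono_l_iff in Hlo; [| lia | lia | lia].
  apply Z.pow_lt_mono_l_iff in Hhi; [| lia | lia | lia].
  lia.
Qed.

Lemma square_plus_five_not_square (n m : Z) :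
  3 <= n -> 0 <= m -> m ^ 2 <> n ^ 2 + 5.
Proof.
  intros Hn Hm Hsq.
  apply (no_square_strictly_between n m); lia.
Qed.

Lemma up_up_down_down_relation (x a z b y : Z) :
  up_edge x a -> up_edge a z -> down_edge z b -> down_edge b y ->
  y ^ 2 = (x + 5) ^ 2 + 5.
Proof.
  intros [_ Ha] [[Ha2 _] Hz] [[Hb _] Hzb] [_ Hby].
  assert (Hb_eq : b = a + 5).
  { apply (Z.pow_inj_l _ _ 2); lia. }
  lia.
Qed.

Theorem theorem7 :
  ~ exists x a z b y : Z,
      inV x /\ inV a /\ inV z /\ inV b /\ inV y /\
      up_edge x a /\ up_edge a z /\ down_edge z b /\ down_edge b y.
Proof.
  intros (x & a & z & b & y & [Hx _] & _ & _ & _ & [Hy _] & Hxa & Haz & Hzb & Hby).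
  apply (square_plus_five_not_square (x + 5) y); [lia | lia |].
  exact (up_up_down_down_relation x a z b y Hxa Haz Hzb Hby).
Qed.
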